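(* Let $r,t,\ell,m$ be integers with $1 \le t \le \ell \le m$ and $1 \le r \le \ell$. Then $$\mathfrak{w}_r(t;\ell,m) = \frac{q-1}{q}\sum_{s=1}^r q^{\binom{s}{2}}\left(\frac{[m]_q!}{[m-t]_q!} - (-1)^s \frac{[m-s]_q!}{[m-t]_q!} \right)q^{s(\ell-r)}q^{\binom{t-s}{2}}{r\brack s}_q {\ell-r\brack t-s}_q$$ $$=\frac{q-1}{q}\left(\mu_t(\ell,m) -\sum_{s=0}^r (-1)^s q^{\binom{s}{2}} \frac{[m-s]_q!}{[m-t]_q!}\,q^{s(\ell-r)}\,q^{\binom{t-s}{2}}{r\brack s}_q {\ell-r\brack t-s}_q\right),$$ where terms with $s>t$ vanish because the Gaussian binomial ${\ell-r\brack t-s}_q$ is then $0$.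
   Context: $q$ is a prime power. $\mu_t(\ell,m)$ is the number of $\ell\times m$ matrices over $\mathbb{F}_q$ of rank exactly $t$. For an $\ell\times m$ matrix $M=(m_{ij})$, $\tau_r(M)=m_{11}+\cdots+m_{rr}$, and $\mathfrak w_r(t;\ell,m)$ is the number of $\ell\times m$ matrices $M$ over $\mathbb{F}_q$ with $\mathrm{rk}(M)=t$ and $\tau_r(M)\ne 0$. The Gaussian factorial is $[n]_q!=\prod_{i=1}^n(q^i-1)$ (with $[0]_q!=1$), and ${n\brack k}_q$ is the Gaussian binomial coefficient, equal to $0$ if $k<0$ or $k>n$. *)

From HB Require Import structures.
From mathcomp Require Import all_boot all_order all_algebra all_field.
Set Implicit Arguments. Unset Strict Implicit. Unset Printing Implicit Defensive.
Import Order.TTheory GRing.Theory Num.Theory.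
Local Open Scope ring_scope.

Definition gfact (q n : nat) : rat :=
  \prod_(1 <= i < n.+1) ((q%:R : rat) ^+ i - 1).

Definition gbinom (q n : nat) (k : int) : rat :=
  match k with
  | Posz k' => if (k' <= n)%N then gfact q n / (gfact q k' * gfact q (n - k')) else 0
  | Negz _ => 0
  end.

Definition tau (F : fieldType) (l m r : nat) (M : 'M[F]_(l, m)) : F :=
  \sum_(i < l) \sum_(j < m) (if ((i : nat) == (j : nat)) && (i < r)%N then M i j else 0).

Definition mu (F : finFieldType) (t l m : nat) : nat :=
  #|[set M : 'M[F]_(l, m) | \rank M == t]|.

Definition wcount (F : finFieldType) (r t l m : nat) : nat :=
  #|[set M : 'M[F]_(l, m) | (\rank M == t) && (tau r M != 0)]|.

From HB Require Import structures.
From mathcomp Require Import all_boot all_order all_algebra all_field.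
From mathcomp Require Import ring zify.
Set Implicit Arguments.
Unset Strict Implicit.
Unset Printing Implicit Defensive.
Import Order.TTheory GRing.Theory Num.Theory.
Local Open Scope ring_scope.

(* Weight every x in F by omega x = 1 if x = 0 and -1/(q-1) otherwise, so that
   omega sums to zero over F, and let the bias B_r(t; l, m) be the sum of
   omega (tau_r M) over the rank-t matrices M.  Splitting the rank-t matrices
   by whether tau_r vanishes gives w = (q-1)/q (mu - B) (wcount_bias).

   Bordering a matrix gives two recursions for B: adding a row outside the
   trace block (bias_add_row), and adding a row and a column that enlarge the
   trace block (bias_add_corner); in the latter only a zero border column
   contributes, because otherwise the new corner entry is a nonzero linear
   form on the row space and is balanced.  They yield B_r(t; r, m) =
   (-1)^t q^C(t,2) [r, t] (bias_square) and then B_r(t; r + L, m) [m-t]! as a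
   sum over s <= r against the kernel q^(sL) q^C(t-s,2) [L, t-s], which obeys
   the same recursion by q-Pascal (bias_formula, kernel_rec).  For r = 0 this
   is the classical count of rank-t matrices, which the q-Vandermonde identity
   expands over the trace block (mu_closed); the two closed forms give the two
   expressions of the theorem. *)

Section GaussianBinomials.

Variable q : nat.
Local Notation Q := (q%:R : rat).

Lemma gfact0 : gfact q 0 = 1.
Proof. by rewrite /gfact big_geq. Qed.

Lemma gfactS n : gfact q n.+1 = gfact q n * (Q ^+ n.+1 - 1).
Proof. by rewrite /gfact big_nat_recr. Qed.

Lemma gbinom_lt0 n (k : int) : k < 0 -> gbinom q n k = 0.
Proof. by case: k. Qed.

Lemma gbinom_gt n k : (n < k)%N -> gbinom q n k = 0.
Proof. by move=> n_lt_k; rewrite /gbinom leqNgt n_lt_k. Qed.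

(* The kernel q^(sL) q^C(t-s,2) [L, t-s] shared by all sums of the theorem,
   with L = l - r the number of rows outside the trace block. *)
Definition kernel (L t s : nat) : rat :=
  Q ^+ (s * L) * Q ^+ 'C(t - s, 2) * gbinom q L (t%:Z - s%:Z).

Lemma kernel_gt L t s : (t < s)%N -> kernel L t s = 0.
Proof. by move=> t_lt_s; rewrite /kernel gbinom_lt0 ?mulr0 // subr_lt0 ltz_nat. Qed.

Lemma kernel_shift L s k :
  kernel L (s + k) s = Q ^+ (s * L) * Q ^+ 'C(k, 2) * gbinom q L k.
Proof. by rewrite /kernel addKn PoszD addrAC subrr add0r. Qed.

Lemma kernel_large L t s : (L + s < t)%N -> kernel L t s = 0.
Proof.
move=> Ls_lt_t; have [k tE] : exists k, t = (s + k)%N by exists (t - s)%N; lia.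
by rewrite tE kernel_shift gbinom_gt ?mulr0 //; lia.
Qed.

Definition kernel_sum (r : nat) (c : nat -> rat) (t L : nat) : rat :=
  \sum_(0 <= s < r.+1) c s * kernel L t s.

Lemma kernel_sum_large r c t L : (r + L < t)%N -> kernel_sum r c t L = 0.
Proof.
move=> rL_lt_t; rewrite /kernel_sum big_nat big1 // => s /andP[_ s_le_r].
by rewrite kernel_large ?mulr0 //; lia.
Qed.

(* From here on q > 1, so that the Gaussian factorials are nonzero. *)
Hypothesis q_gt1 : (1 < q)%N.

Lemma expQ_neq1 i : (0 < i)%N -> Q ^+ i - 1 != 0.
Proof.
move=> i_gt0; rewrite subr_eq0; apply/eqP => Qi1.
have Q_gt1 : 1 < Q by rewrite ltr1n.
by move: (exprn_egt1 i Q_gt1); rewrite Qi1 ltxx -lt0n i_gt0.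
Qed.

Lemma gfact_neq0 n : gfact q n != 0.
Proof.
elim: n => [|n IHn]; first by rewrite gfact0 oner_eq0.
by rewrite gfactS mulf_neq0 // expQ_neq1.
Qed.

Lemma gbinom_n0 n : gbinom q n 0 = 1.
Proof. by rewrite /gbinom /= subn0 gfact0 mul1r divff // gfact_neq0. Qed.

Lemma gbinom_nn n : gbinom q n n = 1.
Proof. by rewrite /gbinom leqnn subnn gfact0 mulr1 divff // gfact_neq0. Qed.

Lemma gbinom_pascal n k :
  gbinom q n.+1 k.+1 = gbinom q n k + Q ^+ k.+1 * gbinom q n k.+1.
Proof.
case: (ltngtP k n) => [k_lt_n | n_lt_k | ->]; last 2 first.
- by rewrite !gbinom_gt // ?mulr0 ?addr0 // ltnW.
- by rewrite gbinom_nn (gbinom_gt (ltnSn n)) mulr0 addr0 gbinom_nn.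
have [d ->] : exists d, n = (k + d).+1 by exists (n - k.+1)%N; lia.
rewrite /gbinom !ifT; try lia.
have -> : ((k + d).+2 - k.+1 = d.+1)%N by lia.
have -> : ((k + d).+1 - k = d.+1)%N by lia.
have -> : ((k + d).+1 - k.+1 = d)%N by lia.
have splitQ : Q ^+ (k + d).+2 = Q ^+ k.+1 * Q ^+ d.+1.
  by rewrite -exprD; congr (_ ^+ _); lia.
rewrite (gfactS (k + d).+1) splitQ (gfactS k) (gfactS d).
by field; rewrite !gfact_neq0 !expQ_neq1.
Qed.

Lemma kernel_diag L s : kernel L s s = Q ^+ (s * L).
Proof. by rewrite -{1}[s]addn0 kernel_shift gbinom_n0 !mulr1. Qed.

Lemma kernel_L0 t s : kernel 0 t s = (s == t)%:R.
Proof.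
case: (ltngtP s t) => [s_lt_t | t_lt_s | ->].
- by rewrite kernel_large // ltn_eqF.
- by rewrite kernel_gt // gtn_eqF.
- by rewrite kernel_diag muln0.
Qed.

(* The kernel inherits the q-Pascal rule, in the form matching the
   rank recursion obtained by adding one row to a matrix. *)
Lemma kernel_rec L t s :
  kernel L.+1 t.+1 s = Q ^+ t.+1 * kernel L t.+1 s + Q ^+ t * kernel L t s.
Proof.
case: (ltngtP s t.+1) => [s_le_t | t1_lt_s | ->].
- have [k ->] : exists k, t = (s + k)%N by exists (t - s)%N; lia.
  rewrite -addnS !kernel_shift gbinom_pascal binS bin1 mulnS !exprD !exprS.
  ring.
- by rewrite !kernel_gt ?mulr0 ?addr0 //; apply: ltn_trans t1_lt_s.
- by rewrite !kernel_diag kernel_gt // mulr0 addr0 mulnS exprD.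
Qed.

Lemma kernel_sum_rec r c t L :
  kernel_sum r c t.+1 L.+1 = Q ^+ t.+1 * kernel_sum r c t.+1 L + Q ^+ t * kernel_sum r c t L.
Proof.
rewrite /kernel_sum !mulr_sumr -big_split /=; apply: eq_bigr => s _.
by rewrite kernel_rec; ring.
Qed.

Lemma kernel_sum_L0 r c t : kernel_sum r c t 0 = if (t <= r)%N then c t else 0.
Proof.
rewrite /kernel_sum (eq_bigr (fun s => if s == t then c s else 0)) => [|s _].
  by rewrite -big_mkcond big_nat1_eq ltnS.
by rewrite kernel_L0; case: eqP; rewrite ?mulr1 ?mulr0.
Qed.

Lemma kernel_sum_t0 r c L : kernel_sum r c 0 L = c 0.
Proof.
rewrite /kernel_sum big_ltn // kernel_diag mul0n mulr1 big_nat big1 ?addr0 //.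
by move=> s /andP[s_gt0 _]; rewrite kernel_gt ?mulr0.
Qed.

Lemma q_vandermonde r L t :
  kernel_sum r (fun s => Q ^+ 'C(s, 2) * gbinom q r s) t L =
  Q ^+ 'C(t, 2) * gbinom q (r + L) t.
Proof.
elim: L t => [|L IHL] t.
  by rewrite kernel_sum_L0 addn0; case: leqP => // r_lt_t; rewrite gbinom_gt ?mulr0.
case: t => [|t]; first by rewrite kernel_sum_t0 !gbinom_n0.
by rewrite kernel_sum_rec !IHL addnS gbinom_pascal binS bin1 exprD; ring.
Qed.

End GaussianBinomials.

Lemma sum_col_mx (R : nmodType) (T : finType) l1 l2 m
    (G : 'M[T]_(l1 + l2, m) -> R) :
  \sum_M G M = \sum_(U : 'M[T]_(l1, m)) \sum_(D : 'M[T]_(l2, m)) G (col_mx U D).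
Proof.
rewrite pair_bigA /= (reindex (fun UD => col_mx UD.1 UD.2)) //=.
exists (fun M => (usubmx M, dsubmx M)) => [[U D] _ | M _] /=.
  by rewrite col_mxKu col_mxKd.
by rewrite vsubmxK.
Qed.

Lemma sum_row_mx (R : nmodType) (T : finType) l m1 m2
    (G : 'M[T]_(l, m1 + m2) -> R) :
  \sum_M G M = \sum_(U : 'M[T]_(l, m1)) \sum_(D : 'M[T]_(l, m2)) G (row_mx U D).
Proof.
rewrite pair_bigA /= (reindex (fun UD => row_mx UD.1 UD.2)) //=.
exists (fun M => (lsubmx M, rsubmx M)) => [[U D] _ | M _] /=.
  by rewrite row_mxKl row_mxKr.
by rewrite hsubmxK.
Qed.

Lemma rank_col_cons (F : fieldType) k m (u : 'rV[F]_m) (N : 'M[F]_(k, m)) :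
  \rank (col_mx u N) = (\rank N + ~~ (u <= N)%MS)%N.
Proof.
rewrite -addsmxE; have [uN | uNn] := boolP (u <= N)%MS.
  by rewrite (addsmx_idPr uN) addn0.
have rank_lt : (\rank N < \rank (u + N))%N.
  rewrite (ltn_leqif (mxrank_leqif_sup (addsmxSr u N))).
  by rewrite addsmx_sub negb_and uNn.
have rank_le := (mxrank_adds_leqif u N).1.
have := rank_leq_row u; lia.
Qed.

Section FiniteLinearAlgebra.

Variable F : finFieldType.
Local Notation Q := (#|F|%:R : rat).

Lemma sum_span (R : nmodType) k m (N : 'M[F]_(k, m)) (g : 'rV[F]_m -> R) :
  \sum_(u | (u <= N)%MS) g u = \sum_(v : 'rV[F]_(\rank N)) g (v *m row_base N).
Proof.
have [B baseB] := row_freeP (row_base_free N).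
have coord_inj : injective (fun v : 'rV[F]_(\rank N) => v *m row_base N).
  by apply: (can_inj (g := mulmx^~ B)) => v; rewrite -mulmxA baseB mulmx1.
rewrite -(big_imset _ (in2W coord_inj)) /=; apply: eq_bigl => u.
apply/idP/imsetP => [|[v _ ->]]; last by rewrite -(eq_row_base N) submxMl.
by rewrite -(eq_row_base N) => /submxP[v ->]; exists v.
Qed.

Lemma card_span k m (N : 'M[F]_(k, m)) :
  \sum_(u : 'rV[F]_m | (u <= N)%MS) (1 : rat) = Q ^+ \rank N.
Proof. by rewrite sum_span sumr_const card_mx mul1n natrX. Qed.

Lemma card_rV m : \sum_(u : 'rV[F]_m) (1 : rat) = Q ^+ m.
Proof. by rewrite sumr_const card_mx mul1n natrX. Qed.

Lemma sum_rank_cons (R : zmodType) k m t (N : 'M[F]_(k, m)) (g : 'rV[F]_m -> R) :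
  \sum_(u | \rank (col_mx u N) == t.+1) g u =
  (if \rank N == t.+1 then \sum_(u | (u <= N)%MS) g u else 0) +
  (if \rank N == t then \sum_u g u - \sum_(u | (u <= N)%MS) g u else 0).
Proof.
have rank_eq (u : 'rV[F]_m) : (\rank (col_mx u N) == t.+1) =
    (\rank N == t.+1) && (u <= N)%MS || (\rank N == t) && ~~ (u <= N)%MS.
  by rewrite rank_col_cons; case: (u <= N)%MS; case: eqP; case: eqP => //=; lia.
have [rkN | rkN] := eqVneq (\rank N) t.+1.
  rewrite (eq_bigl _ _ rank_eq) rkN eqxx (gtn_eqF (ltnSn t)) addr0.
  by apply: eq_bigl => u; rewrite orbF.
rewrite add0r (eq_bigl _ _ rank_eq) (negbTE rkN) /=.
have [_ | _] := eqVneq (\rank N) t; last by rewrite big_pred0.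
by rewrite [in RHS](bigID (fun u => (u <= N)%MS)) /= addrAC subrr add0r.
Qed.

End FiniteLinearAlgebra.

Section TraceWeights.

Variable F : finFieldType.
Local Notation Q := (#|F|%:R : rat).

Lemma Q_neq1 : Q - 1 != 0.
Proof. by rewrite subr_eq0 pnatr_eq1 gtn_eqF ?card_finNzRing_gt1. Qed.

Definition omega (x : F) : rat := if x == 0 then 1 else - (Q - 1)^-1.

Lemma sum_omega_shift (c : F) : \sum_x omega (x + c) = 0.
Proof.
rewrite (reindex_inj (addIr (- c))) /= (eq_bigr omega) => [|x _]; last first.
  by rewrite addrNK.
rewrite (bigD1 0) //= /omega eqxx.
rewrite (eq_bigr (fun _ => - (Q - 1)^-1)) => [|x /negbTE -> //].
have card_pred : ((#|F|.-1)%:R : rat) = Q - 1.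
  by rewrite -subn1 natrB // ltnW ?card_finNzRing_gt1.
rewrite sumr_const cardC1 -[_ *+ _.-1]mulr_natl card_pred.
by rewrite mulrN mulfV ?Q_neq1 // subrr.
Qed.

(* A function on row vectors that moves at unit speed along some direction v0
   takes every value equally often, so the balanced weight averages to 0. *)
Lemma sum_omega_affine k (h : 'rV[F]_k -> F) (v0 : 'rV[F]_k) (c : F) :
  (forall v x, h (v + x *: v0) = h v + x) -> \sum_v omega (h v + c) = 0.
Proof.
move=> h_slope; set S := \sum_v _.
have S_shift (x : F) : S = \sum_v omega (x + (h v + c)).
  rewrite /S (reindex_inj (addIr (x *: v0))) /=.
  by apply: eq_bigr => v _; rewrite h_slope addrAC addrC.
have : \sum_(x : F) S = 0.
  rewrite (eq_bigr _ (fun x _ => S_shift x)) exchange_big big1 // => v _.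
  exact: sum_omega_shift.
rewrite sumr_const -mulr_natl => /eqP; rewrite mulf_eq0 pnatr_eq0.
by case/orP => [/eqP/card0_eq/(_ 0) | /eqP].
Qed.

End TraceWeights.

Lemma tau_r0 (F : fieldType) l m (M : 'M[F]_(l, m)) : tau 0 M = 0.
Proof. by rewrite /tau big1 // => i _; rewrite big1 // => j _; rewrite andbF. Qed.

Lemma tau_mx0 (F : fieldType) r l m : tau r (0 : 'M[F]_(l, m)) = 0.
Proof. by rewrite /tau big1 // => i _; rewrite big1 // => j _; rewrite mxE if_same. Qed.

Lemma tau_col_mx_low (F : fieldType) r l m (U : 'M[F]_(l, m)) (d : 'rV[F]_m) :
  (r <= l)%N -> tau r (col_mx U d) = tau r U.
Proof.
move=> r_le_l; rewrite /tau big_split_ord /= big_ord1 [X in _ + X]big1 ?addr0.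
  by apply: eq_bigr => i _; apply: eq_bigr => j _; rewrite col_mxEu.
by move=> j _; rewrite /= addn0 ltnNge r_le_l andbF.
Qed.

Lemma tau_corner (F : fieldType) r l m (u : 'rV[F]_(1 + m)) (c : 'cV[F]_l)
    (D : 'M[F]_(l, m)) :
  tau r.+1 (col_mx u (row_mx c D) : 'M_(1 + l, 1 + m)) = u 0 0 + tau r D.
Proof.
rewrite /tau big_split_ord /= big_ord1; congr (_ + _).
  rewrite big_split_ord /= big_ord1 [X in _ + X]big1 ?addr0 //.
  by rewrite col_mxEu; congr (u _ _); apply/val_inj.
apply: eq_bigr => i _; rewrite big_split_ord /= big_ord1 add0r.
by apply: eq_bigr => j _; rewrite /= !add1n eqSS ltnS col_mxEd row_mxEr.
Qed.

Section Bias.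

Variable F : finFieldType.
Local Notation Q := (#|F|%:R : rat).

(* It compares the number of zeros of
   tau_r with the average number of preimages of a nonzero value. *)
Definition bias (r t l m : nat) : rat :=
  \sum_(M : 'M[F]_(l, m) | \rank M == t) omega (tau r M).

Lemma bias_t0 r l m : bias r 0 l m = 1.
Proof.
rewrite /bias (eq_bigl (pred1 0)) => [|M]; last by rewrite mxrank_eq0.
by rewrite big_pred1_eq tau_mx0 /omega eqxx.
Qed.

Lemma bias_large r t l m : (l < t)%N -> bias r t l m = 0.
Proof.
move=> l_lt_t; rewrite /bias big_pred0 // => M.
by apply/negbTE; rewrite neq_ltn (leq_ltn_trans (rank_leq_row M)).
Qed.

(* Adding a row outside the trace block: the row space of the first l rows
   decides how many new rows keep or raise the rank. *)
Lemma bias_add_row r t l m : (r <= l)%N ->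
  bias r t.+1 (l + 1) m = Q ^+ t.+1 * bias r t.+1 l m + (Q ^+ m - Q ^+ t) * bias r t l m.
Proof.
move=> r_le_l; rewrite /bias big_mkcond sum_col_mx [in RHS]big_mkcond.
rewrite [in RHS](big_mkcond (fun M => _ == t)) !mulr_sumr -big_split /=.
apply: eq_bigr => U _.
transitivity (omega (tau r U) * \sum_(d : 'rV[F]_m | \rank (col_mx d U) == t.+1) 1).
  rewrite mulr_sumr [in RHS]big_mkcond; apply: eq_bigr => d _.
  rewrite -addsmxE addsmxC addsmxE tau_col_mx_low //.
  by case: ifP; rewrite ?mulr1 ?mulr0.
rewrite sum_rank_cons card_span card_rV.
case: (eqVneq (\rank U) t.+1) => [-> | _].
  by rewrite (gtn_eqF (ltnSn t)) !addr0 mulr0 addr0 mulrC.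
case: (eqVneq (\rank U) t) => [-> | _]; last by rewrite !mulr0 addr0.
by rewrite !add0r mulr0 add0r mulrC.
Qed.

(* On the row space of [c D], the first coordinate vanishes identically if
   c = 0 and is a nonzero linear form otherwise, so its weight is balanced. *)
Lemma sum_span_omega l m (c : 'cV[F]_l) (D : 'M[F]_(l, m)) (k : F) :
  \sum_(u : 'rV[F]_(1 + m) | (u <= row_mx c D)%MS) omega (u 0 0 + k) =
  if c == 0 then Q ^+ \rank D * omega k else 0.
Proof.
have first_col : (0 : 'I_(1 + m)) = lshift m 0 by apply/val_inj.
have [-> | c_neq0] := eqVneq c 0.
  rewrite (eq_bigr (fun _ => 1 * omega k)) => [|u /submxP[v ->]]; last first.
    by rewrite mul_mx_row mulmx0 first_col row_mxEl mxE add0r mul1r.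
  by rewrite -mulr_suml card_span rank_row_0mx.
rewrite sum_span; set B := row_base (row_mx c D).
have [i ci_neq0] : exists i, c i 0 != 0 by apply/cV0Pn.
have /submxP[y rowiE] : (row i (row_mx c D) <= B)%MS by rewrite eq_row_base row_sub.
have yB00 : \sum_j y 0 j * B j 0 = c i 0.
  have first_entry : (y *m B) 0 0 = c i 0 by rewrite -rowiE mxE first_col row_mxEl.
  by rewrite -first_entry mxE.
apply: (@sum_omega_affine F _ _ ((c i 0)^-1 *: y)) => v x.
by rewrite mulmxDl -!scalemxAl !mxE yB00 mulVf // mulr1.
Qed.

(* Adding a row and a column that enlarge the trace block by one diagonal
   entry: only a zero new column contributes, as in sum_span_omega. *)
Lemma bias_add_corner r t l m :
  bias r.+1 t.+1 (1 + l) (1 + m) = Q ^+ t.+1 * bias r t.+1 l m - Q ^+ t * bias r t l m.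
Proof.
have border (c : 'cV[F]_l) (D : 'M[F]_(l, m)) :
    \sum_(u : 'rV[F]_(1 + m)) (if \rank (col_mx u (row_mx c D)) == t.+1
      then omega (tau r.+1 (col_mx u (row_mx c D) : 'M_(1 + l, 1 + m))) else 0) =
    if c == 0 then (if \rank D == t.+1 then Q ^+ t.+1 * omega (tau r D) else 0) -
                   (if \rank D == t then Q ^+ t * omega (tau r D) else 0)
    else 0.
  rewrite -big_mkcond; under eq_bigr => u _ do rewrite tau_corner.
  have sum_all : \sum_(u : 'rV[F]_(1 + m)) omega (u 0 0 + tau r D) = 0.
    apply: (@sum_omega_affine F _ (fun u => u 0 0) (delta_mx 0 0)) => v x.
    by rewrite !mxE eqxx mulr1.
  rewrite sum_rank_cons !sum_span_omega sum_all.
  have [-> | _] := eqVneq c 0; last by rewrite subrr !if_same addr0.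
  rewrite rank_row_0mx.
  case: (eqVneq (\rank D) t.+1) => [-> | _].
    by rewrite (gtn_eqF (ltnSn t)) /= addr0.
  by case: (eqVneq (\rank D) t) => [-> | _]; rewrite ?sub0r ?add0r ?subr0.
rewrite /bias big_mkcond sum_col_mx exchange_big /= sum_row_mx.
rewrite (eq_bigr _ (fun c _ => eq_bigr _ (fun D _ => border c D))).
rewrite (bigD1 (0 : 'cV[F]_l)) //= [X in _ + X]big1 ?addr0 => [|c /negbTE c_neq0].
  rewrite eqxx sumrB !mulr_sumr.
  by rewrite (big_mkcond (fun D => _ == t.+1)) (big_mkcond (fun D => _ == t)).
by rewrite big1 // => D _; rewrite c_neq0.
Qed.

End Bias.

Definition alt_coef (q r m s : nat) : rat :=
  (-1) ^+ s * (q%:R : rat) ^+ 'C(s, 2) * gfact q (m - s) * gbinom q r s.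

Lemma natr_card_set (R : pzSemiRingType) (T : finType) (P : pred T) :
  (#|[set x | P x]|%:R : R) = \sum_(x | P x) 1.
Proof. by rewrite -sum1_card natr_sum; apply: eq_bigl => x; rewrite inE. Qed.

(* The tactic ring handles the cast of #|F| (and the sign (-1)^t) only once
   they are abstracted, hence the [move: Q => x] before some calls to it. *)
Section ClosedForms.

Variable F : finFieldType.
Local Notation q := #|F|.
Local Notation Q := (#|F|%:R : rat).

Lemma gfactF_neq0 n : gfact q n != 0.
Proof. exact/gfact_neq0/card_finNzRing_gt1. Qed.

Lemma bias_square r t m : (r <= m)%N ->
  bias F r t r m = (-1) ^+ t * Q ^+ 'C(t, 2) * gbinom q r t.
Proof.
have q_gt1 := card_finNzRing_gt1 F.
elim: r t m => [|r IHr] [|t] m r_le_m; rewrite ?bias_t0 ?gbinom_n0 //.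
  by rewrite bias_large // gbinom_gt ?mulr0.
case: m r_le_m => // m r_le_m.
have := bias_add_corner F r t r m; rewrite !add1n => ->.
rewrite !IHr // gbinom_pascal // binS bin1 exprD [(-1) ^+ t.+1]exprS.
by move: Q ((-1) ^+ t : rat) => x sign; ring.
Qed.

(* The bias with L rows outside the trace block, by adding these rows one at a
   time: both sides follow the recursion of kernel_sum_rec. *)
Lemma bias_formula r L t m : (r + L <= m)%N ->
  bias F r t (r + L) m * gfact q (m - t) = kernel_sum q r (alt_coef q r m) t L.
Proof.
have q_gt1 := card_finNzRing_gt1 F.
elim: L t => [|L IHL] t rL_le_m.
  rewrite addn0 in rL_le_m *; rewrite bias_square // kernel_sum_L0 // /alt_coef.
  by case: leqP => [_ | r_lt_t]; [ring | rewrite gbinom_gt ?mulr0 ?mul0r].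
case: t => [|t].
  by rewrite bias_t0 kernel_sum_t0 // /alt_coef gbinom_n0 // bin0n !expr0 !mul1r mulr1.
have [t_gt | t_le] := ltnP (r + L.+1) t.+1.
  by rewrite bias_large ?kernel_sum_large ?mul0r.
rewrite addnS -[(r + L).+1]addn1 bias_add_row ?leq_addr //.
rewrite kernel_sum_rec // -(IHL t.+1) -?(IHL t); try lia.
have dropE : (m - t = (m - t.+1).+1)%N by lia.
have splitQ : Q ^+ m = Q ^+ t * Q ^+ (m - t) by rewrite -exprD subnKC //; lia.
rewrite splitQ dropE gfactS -dropE.
by move: Q => x; ring.
Qed.

Lemma mu_bias t l m : ((mu F t l m)%:R : rat) = bias F 0 t l m.
Proof.
rewrite /mu natr_card_set; apply: eq_bigr => M _.
by rewrite tau_r0 /omega eqxx.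
Qed.

Lemma mu_formula t l m : (l <= m)%N ->
  (mu F t l m)%:R * gfact q (m - t) = gfact q m * Q ^+ 'C(t, 2) * gbinom q l t.
Proof.
move=> l_le_m; have q_gt1 := card_finNzRing_gt1 F.
rewrite mu_bias -[l]add0n bias_formula // /kernel_sum big_nat1 (kernel_shift _ _ 0 t).
by rewrite /alt_coef subn0 gbinom_n0 // bin0n !expr0 !mul1r mulr1 mulrA.
Qed.

Lemma wcount_bias r t l m :
  ((wcount F r t l m)%:R : rat) = (Q - 1) / Q * ((mu F t l m)%:R - bias F r t l m).
Proof.
rewrite /wcount /mu !natr_card_set /bias.
rewrite !(bigID (fun M => tau r M == 0) (fun M => \rank M == t)) /=.
set zeros := (fun M : 'M[F]_(l, m) => (\rank M == t) && (tau r M == 0)).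
set nonzeros := (fun M : 'M[F]_(l, m) => (\rank M == t) && (tau r M != 0)).
have omega_zeros : \sum_(M | zeros M) omega (tau r M) = \sum_(M | zeros M) 1.
  by apply: eq_bigr => M /andP[_ /eqP ->]; rewrite /omega eqxx.
have omega_nonzeros :
    \sum_(M | nonzeros M) omega (tau r M) = - (Q - 1)^-1 * \sum_(M | nonzeros M) 1.
  by rewrite mulr_sumr; apply: eq_bigr => M /andP[_ /negbTE tau_neq0];
    rewrite /omega tau_neq0 mulr1.
rewrite omega_zeros omega_nonzeros.
have Q_neq0 : Q != 0 by rewrite pnatr_eq0 -lt0n ltnW ?card_finNzRing_gt1.
by field; rewrite Q_neq0 Q_neq1.
Qed.

Lemma bias_closed r t l m : (r <= l)%N -> (l <= m)%N ->
  bias F r t l m =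
  \sum_(0 <= s < r.+1)
    (-1) ^+ s * Q ^+ 'C(s, 2) * (gfact q (m - s) / gfact q (m - t)) *
    Q ^+ (s * (l - r)) * Q ^+ 'C(t - s, 2) *
    gbinom q r s%:Z * gbinom q (l - r) (t%:Z - s%:Z).
Proof.
move=> r_le_l l_le_m; apply: (mulIf (gfactF_neq0 (m - t))).
rewrite -{1}(subnKC r_le_l) bias_formula ?subnKC // mulr_suml.
apply: eq_bigr => s _; rewrite /alt_coef /kernel.
by field; rewrite gfactF_neq0.
Qed.

(* The number of rank-t matrices, expanded by q-Vandermonde over the
   trace block. *)
Lemma mu_closed r t l m : (r <= l)%N -> (l <= m)%N ->
  ((mu F t l m)%:R : rat) =
  \sum_(0 <= s < r.+1)
    Q ^+ 'C(s, 2) * (gfact q m / gfact q (m - t)) *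
    Q ^+ (s * (l - r)) * Q ^+ 'C(t - s, 2) *
    gbinom q r s%:Z * gbinom q (l - r) (t%:Z - s%:Z).
Proof.
move=> r_le_l l_le_m; apply: (mulIf (gfactF_neq0 (m - t))).
rewrite mu_formula // -{1}(subnKC r_le_l) -mulrA -q_vandermonde ?card_finNzRing_gt1 //.
rewrite /kernel_sum mulr_sumr mulr_suml; apply: eq_bigr => s _; rewrite /kernel.
by field; rewrite gfactF_neq0.
Qed.

End ClosedForms.

Theorem mainTheorem17 (F : finFieldType) (r t l m : nat)
  (ht1 : (1 <= t)%N) (htl : (t <= l)%N) (hlm : (l <= m)%N)
  (hr1 : (1 <= r)%N) (hrl : (r <= l)%N) :
  let q := #|F| in
  let qR : rat := q%:R in
  ((wcount F r t l m)%:R : rat) =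
    (qR - 1) / qR *
      \sum_(1 <= s < r.+1)
        qR ^+ 'C(s, 2) *
        (gfact q m / gfact q (m - t) - (-1) ^+ s * (gfact q (m - s) / gfact q (m - t))) *
        qR ^+ (s * (l - r)) * qR ^+ 'C(t - s, 2) *
        gbinom q r s%:Z * gbinom q (l - r) (t%:Z - s%:Z)
  /\
  ((wcount F r t l m)%:R : rat) =
    (qR - 1) / qR *
      ((mu F t l m)%:R -
        \sum_(0 <= s < r.+1)
          (-1) ^+ s * qR ^+ 'C(s, 2) * (gfact q (m - s) / gfact q (m - t)) *
          qR ^+ (s * (l - r)) * qR ^+ 'C(t - s, 2) *
          gbinom q r s%:Z * gbinom q (l - r) (t%:Z - s%:Z)).
Proof.
move=> q qR; rewrite {}/qR {}/q wcount_bias -bias_closed //.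
split=> //; congr (_ * _).
rewrite (@mu_closed F r t l m hrl hlm) (@bias_closed F r t l m hrl hlm).
rewrite -sumrB big_ltn // !subn0 [(-1) ^+ 0]expr0 mul1r subrr add0r.
by apply: eq_bigr => s _; ring.
Qed.
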